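(* Let $G=(V,E)$ be a regular graph, identified with its (symmetric) random-walk matrix, let $\lambda\in(0,1)$, $q\ge2$, and let $P_{\ge\lambda}$ be the orthogonal projector onto the span of the eigenvectors of $G$ with eigenvalue at least $\lambda$. Then for every nonempty $S\subseteq V$, $$\Phi(S)\ \ge\ 1-\lambda-\|P_{\ge\lambda}\|_{q/(q-1)\to2}^2\,\mu(S)^{(q-2)/q}.$$
   Context: Functions on $V$ carry the uniform (expectation) measure: $\|f\|_p=(\mathbb{E}_{x\in V}|f(x)|^p)^{1/p}$, $\langle f,g\rangle=\mathbb{E}_xf(x)g(x)$, and $\|A\|_{p\to2}=\max_{\|f\|_p\le1}\|Af\|_2$. $\mu(S)=|S|/|V|$. The expansion $\Phi(S)=\Pr[y\notin S]$, where $x$ is uniform in $S$ and $y$ is a uniformly random neighbor of $x$. *)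

From Stdlib Require Import Reals List.
Import ListNotations.
Open Scope R_scope.

(* The vertex set V is {0, ..., n-1}; functions on V are nat -> R
   (values outside V are irrelevant). *)

Definition vsum (n : nat) (f : nat -> R) : R :=
  fold_right Rplus 0 (map f (seq 0 n)).

Definition vexp (n : nat) (f : nat -> R) : R := vsum n f / INR n.

(* real power with the convention 0^y = 0 (for y > 0) *)
Definition rpow (x y : R) : R :=
  if Req_EM_T x 0 then 0 else Rpower x y.

Definition pnorm (n : nat) (p : R) (f : nat -> R) : R :=
  rpow (vexp n (fun x => rpow (Rabs (f x)) p)) (1 / p).

Definition inner (n : nat) (f g : nat -> R) : R := vexp n (fun x => f x * g x).

Definition b2R (b : bool) : R := if b then 1 else 0.

Definition regular_graph (n : nat) (adj : nat -> nat -> bool) (d : nat) : Prop :=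
  (forall x y, adj x y = adj y x) /\
  (forall x, adj x x = false) /\
  (forall x, (x < n)%nat -> vsum n (fun y => b2R (adj x y)) = INR d).

Definition walk (n : nat) (adj : nat -> nat -> bool) (d : nat) (f : nat -> R) : nat -> R :=
  fun x => vsum n (fun y => b2R (adj x y) * f y) / INR d.

Definition eigvec (n : nat) (adj : nat -> nat -> bool) (d : nat) (m : R) (v : nat -> R) : Prop :=
  (exists x, (x < n)%nat /\ v x <> 0) /\
  (forall x, (x < n)%nat -> walk n adj d v x = m * v x).

Definition top_span (n : nat) (adj : nat -> nat -> bool) (d : nat) (lam : R) (g : nat -> R) : Prop :=
  exists l : list (R * (nat -> R)),
    (forall c v, In (c, v) l -> exists m, lam <= m /\ eigvec n adj d m v) /\
    (forall x, (x < n)%nat -> g x = fold_right Rplus 0 (map (fun cv => fst cv * snd cv x) l)).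

Definition orth_projector (n : nat) (W : (nat -> R) -> Prop) (P : (nat -> R) -> (nat -> R)) : Prop :=
  forall f, W (P f) /\ (forall w, W w -> inner n (fun x => f x - P f x) w = 0).

(* the set { ||P f||_2 : ||f||_p <= 1 }, whose supremum is ||P||_{p->2} *)
Definition opnorm_set (n : nat) (p : R) (P : (nat -> R) -> (nat -> R)) (r : R) : Prop :=
  exists f, pnorm n p f <= 1 /\ r = pnorm n 2 (P f).

Definition mu (n : nat) (S : nat -> bool) : R := vexp n (fun x => b2R (S x)).

(* Phi(S) = Pr[y notin S], x uniform in S, y uniform neighbour of x *)
Definition expansion (n : nat) (adj : nat -> nat -> bool) (d : nat) (S : nat -> bool) : R :=
  vsum n (fun x => b2R (S x) *
     (vsum n (fun y => b2R (adj x y) * b2R (negb (S y))) / INR d))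
  / vsum n (fun x => b2R (S x)).

From Stdlib Require Import Reals List Lra Lia Classical.
From mathcomp Require ssreflect ssrfun ssrbool eqtype ssrnat seq fintype bigop
  ssralg ssrnum matrix sesquilinear spectral complex ring Rstruct.
Open Scope R_scope.

(* Put g = mu(S)^(-1/p) 1_S, so that ||g||_p = 1 and ||P g||_2 <= ||P||.
   The core estimate is the spectral bound
        <g, G g> <= lam <g, g> + <P g, P g>                (walk_form_top_bound)
   obtained by expanding g in an eigen-frame of G: the eigen-directions with
   eigenvalue below lam contribute at most lam times their weight, while
   those with eigenvalue >= lam lie in the range of P, where the coefficients
   of g and of P g coincide and the eigenvalue is at most 1.  Since
   Phi(S) = 1 - <1_S, G 1_S> / |S|, rescaling by mu(S)^(-1/p) gives the claim. *)

Module RealSpectral.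
Import ssreflect ssrfun ssrbool eqtype ssrnat seq fintype bigop ssralg ssrnum
  matrix sesquilinear spectral complex ring Rstruct.
Import GRing.Theory Num.Theory.
Set Implicit Arguments.
Unset Strict Implicit.
Local Open Scope ring_scope.
Local Open Scope sesquilinear_scope.

(* Eigen-frames: a family (u_j) of eigenvectors of A, indexed by a finite
   type I, that resolves the identity.  It need not be a basis, but it
   still gives Parseval's identity and diagonalizes the quadratic form. *)
Section EigenFrame.
Variables (R : comNzRingType) (n : nat) (I : finType).

Lemma sqr_sum (a : 'I_n -> R) : (\sum_i a i) ^+ 2 = \sum_i \sum_j a i * a j.
Proof. by rewrite expr2 big_distrl; apply: eq_bigr => i _; rewrite big_distrr. Qed.

Lemma rank_one_sum_form (w : I -> R) (u : I -> 'I_n -> R) (g : 'I_n -> R) :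
  \sum_x g x * (\sum_y (\sum_j w j * (u j x * u j y)) * g y)
  = \sum_j w j * (\sum_x g x * u j x) ^+ 2.
Proof.
transitivity (\sum_j \sum_x \sum_y w j * ((g x * u j x) * (g y * u j y))).
  rewrite exchange_big; apply: eq_bigr => x _; rewrite big_distrr exchange_big.
  apply: eq_bigr => y _; rewrite big_distrl big_distrr.
  by apply: eq_bigr => j _ /=; ring.
apply: eq_bigr => j _; rewrite sqr_sum big_distrr.
by apply: eq_bigr => x _; rewrite big_distrr.
Qed.

Variables (A : 'M[R]_n) (d : I -> R) (u : I -> 'I_n -> R).
Hypothesis eigen : forall j x, \sum_y A x y * u j y = d j * u j x.
Hypothesis resolution : forall x y, \sum_j u j x * u j y = (x == y)%:R.

Lemma eigenframe_decomposition x y :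
  A x y = \sum_j d j * (u j x * u j y).
Proof.
transitivity (\sum_z A x z * (z == y)%:R).
  by rewrite (bigD1 y) //= eqxx mulr1 big1 ?addr0 // => z /negbTE ->; rewrite mulr0.
under eq_bigr => z _ do rewrite -resolution big_distrr.
rewrite exchange_big; apply: eq_bigr => j _.
by rewrite mulrA -(eigen j x) big_distrl; apply: eq_bigr => z _ /=; ring.
Qed.

Lemma eigenframe_parseval (g : 'I_n -> R) :
  \sum_x g x * g x = \sum_j (\sum_x g x * u j x) ^+ 2.
Proof.
under [RHS]eq_bigr => j _ do rewrite -[_ ^+ 2]mul1r.
rewrite -(rank_one_sum_form (fun _ => 1)); apply: eq_bigr => x _; congr (_ * _).
under eq_bigr => y _ do under eq_bigr => j _ do rewrite mul1r.
rewrite (bigD1 x) //= resolution eqxx mul1r big1 ?addr0 // => y /negbTE yx.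
by rewrite resolution eq_sym yx mul0r.
Qed.

Lemma eigenframe_form (g : 'I_n -> R) :
  \sum_x g x * (\sum_y A x y * g y) = \sum_j d j * (\sum_x g x * u j x) ^+ 2.
Proof.
rewrite -rank_one_sum_form; apply: eq_bigr => x _; congr (_ * _).
by apply: eq_bigr => y _; rewrite eigenframe_decomposition.
Qed.

End EigenFrame.

Section SymmetricEigenFrame.
Variables (R : rcfType) (n : nat) (A : 'M[R]_n).
Hypothesis A_sym : A^T = A.

Local Notation Re := (@complex.Re R).
Local Notation Im := (@complex.Im R).

Lemma Re_conjM (z w : R[i]) : Re (z^* * w) = Re z * Re w + Im z * Im w.
Proof. by case: z => a b; case: w => c e /=; ring. Qed.

(* A, viewed as a complex matrix, is hermitian, so the spectral theorem
   applies to it: Ac = P^t* diag(D) P with P unitary and D real. *)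
Let Ac := map_mx (real_complex R) A.
Let P := spectralmx Ac.
Let D := spectral_diag Ac.

Lemma complexified_hermitian : Ac \is hermsymmx.
Proof.
rewrite is_hermitianmxE expr0 scale1r; apply/eqP/matrixP => i j.
rewrite !mxE; have := congr1 (fun M : 'M_n => M j i) A_sym; rewrite mxE => <-.
exact/esym/conjc_real.
Qed.

Lemma spectral_unitary_inv : P^t* *m P = 1%:M.
Proof.
by rewrite -invmx_unitary ?spectral_unitarymx //; apply: mulVmx; apply: spectral_unit.
Qed.

Lemma spectral_eigen x j :
  \sum_y (A x y)%:C%C * (P j y)^* = (P j x)^* * (Re (D ord0 j))%:C%C.
Proof.
have /mxOverP D_real := hermitian_spectral_diag_real complexified_hermitian.
have /orthomx_spectralP := hermitian_normalmx complexified_hermitian.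
rewrite -/P -/D invmx_unitary ?spectral_unitarymx // => Ac_diag.
have : Ac *m P^t* = P^t* *m diag_mx D.
  have /unitarymxP P_unitary := spectral_unitarymx Ac.
  by rewrite Ac_diag -!mulmxA P_unitary mulmx1.
move=> /(congr1 (fun M : 'M_n => M x j)); rewrite mul_mx_diag !mxE (RRe_real (D_real ord0 j)).
by move=> <-; apply: eq_bigr => y _; rewrite !mxE.
Qed.

(* The real and imaginary parts of the rows of P form an eigen-frame of A. *)
Definition frame_value (jb : 'I_n * bool) : R := Re (D ord0 jb.1).
Definition frame_vector (jb : 'I_n * bool) (y : 'I_n) : R :=
  if jb.2 then Im (P jb.1 y) else Re (P jb.1 y).

(* Real and imaginary parts of the eigen-equation of spectral_eigen. *)
Lemma frame_eigen jb x :
  \sum_y A x y * frame_vector jb y = frame_value jb * frame_vector jb x.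
Proof.
case: jb => j b; rewrite /frame_vector /frame_value /=; case: b.
- transitivity (- \sum_y Im ((A x y)%:C%C * (P j y)^*)).
    by rewrite -sumrN; apply: eq_bigr => y _; case: (P j y) => a c /=; ring.
  by rewrite -raddf_sum spectral_eigen; case: (P j x) => a c /=; ring.
- transitivity (\sum_y Re ((A x y)%:C%C * (P j y)^*)).
    by apply: eq_bigr => y _; case: (P j y) => a c /=; ring.
  by rewrite -raddf_sum spectral_eigen; case: (P j x) => a c /=; ring.
Qed.

(* Real part of the identity P^t* P = 1. *)
Lemma frame_resolution x y :
  \sum_jb frame_vector jb x * frame_vector jb y = (x == y)%:R.
Proof.
have := congr1 (fun M : 'M_n => Re (M x y)) spectral_unitary_inv.
rewrite !mxE raddf_sum raddfMn /= => <-.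
rewrite -(pair_bigA _ (fun j b => frame_vector (j, b) x * frame_vector (j, b) y)).
by apply: eq_bigr => j _; rewrite big_bool /= !mxE Re_conjM addrC.
Qed.

End SymmetricEigenFrame.

Lemma symmetric_eigenframe (R : rcfType) n (A : 'M[R]_n) : A^T = A ->
  exists (d : 'I_n * bool -> R) (u : 'I_n * bool -> 'I_n -> R),
    (forall j x, \sum_y A x y * u j y = d j * u j x) /\
    (forall x y, \sum_j u j x * u j y = (x == y)%:R).
Proof.
move=> A_sym; exists (frame_value A), (frame_vector A).
by split; [exact: frame_eigen | exact: frame_resolution].
Qed.

Notation RR := Rdefinitions.R.
Local Open Scope R_scope.

Lemma vsumE n (f : nat -> RR) : vsum n f = \sum_(i < n) f i.
Proof.
rewrite -(big_mkord xpredT) /vsum /index_iota subn0.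
have -> : List.seq 0 n = iota 0 n by elim: n {f} 0%N => [//|n IH] k /=; rewrite IH.
by elim: (iota 0 n) => [|x s IH]; rewrite ?big_nil ?big_cons //= IH.
Qed.

Lemma fold_sumE (T : Type) (F : T -> RR) (l : list T) :
  List.fold_right Rplus 0 (List.map F l) = \sum_(t <- l) F t.
Proof. by elim: l => [|x s IH]; rewrite ?big_nil ?big_cons //= IH. Qed.

Definition extend_by_zero {n} (F : 'I_n -> RR) (x : nat) : RR :=
  if (insub x : option 'I_n) is Some i then F i else 0.

Lemma extend_by_zeroE n (F : 'I_n -> RR) (i : 'I_n) : extend_by_zero F i = F i.
Proof. by rewrite /extend_by_zero valK. Qed.

Lemma symmetric_kernel_eigenframe n (a : nat -> nat -> RR) :
  (forall x y, lt x n -> lt y n -> a x y = a y x) ->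
  exists l : list (RR * (nat -> RR)),
    (forall m u, List.In (m, u) l -> forall x, lt x n ->
       vsum n (fun y => a x y * u y) = m * u x) /\
    (forall g, vsum n (fun x => g x * g x) =
       List.fold_right Rplus 0 (List.map (fun mu => vsum n (fun x => g x * snd mu x) ^ 2) l)) /\
    (forall g, vsum n (fun x => g x * vsum n (fun y => a x y * g y)) =
       List.fold_right Rplus 0
         (List.map (fun mu => fst mu * vsum n (fun x => g x * snd mu x) ^ 2) l)).
Proof.
move=> a_sym; pose A := \matrix_(i < n, j < n) a i j.
have A_symT : A^T = A by apply/matrixP => i j; rewrite !mxE a_sym //; apply/ltP.
have [d [u [u_eigen u_res]]] := symmetric_eigenframe A_symT.
have coordE g j :
    vsum n (fun x => g x * extend_by_zero (u j) x) = \sum_(x < n) g x * u j x.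
  by rewrite vsumE; apply: eq_bigr => x _; rewrite extend_by_zeroE.
exists [seq (d j, extend_by_zero (u j)) | j <- index_enum ('I_n * bool)%type].
split; [|split] => [m v /List.in_map_iff [j [[<- <-] _]] x /ltP x_lt_n | g | g].
- rewrite vsumE -[x]/(nat_of_ord (Ordinal x_lt_n)) extend_by_zeroE RmultE -u_eigen.
  by apply: eq_bigr => y _; rewrite extend_by_zeroE mxE.
- rewrite fold_sumE big_map vsumE (eigenframe_parseval u_res).
  by apply: eq_bigr => j _; rewrite /= coordE !RmultE mulr1 expr2.
- rewrite fold_sumE big_map vsumE.
  under [RHS]eq_bigr => j _ do rewrite /= coordE !RmultE mulr1 -expr2.
  rewrite -(eigenframe_form u_eigen u_res); apply: eq_bigr => x _.
  rewrite vsumE RmultE; congr (_ * _).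
  by apply: eq_bigr => y _; rewrite mxE RmultE.
Qed.
End RealSpectral.

Lemma fold_Rplus_shift (l : list R) (a : R) :
  fold_right Rplus a l = fold_right Rplus 0 l + a.
Proof. induction l as [|x l IH]; simpl; [ring | rewrite IH; ring]. Qed.

Lemma vsum_S n f : vsum (S n) f = vsum n f + f n.
Proof.
  unfold vsum. rewrite seq_S, map_app, fold_right_app. simpl.
  rewrite fold_Rplus_shift. ring.
Qed.

Lemma vsum_ext n f g : (forall x, (x < n)%nat -> f x = g x) -> vsum n f = vsum n g.
Proof.
  induction n as [|n IH]; intro H; [reflexivity|].
  rewrite !vsum_S, IH, H; [reflexivity | lia | intros; apply H; lia].
Qed.

Lemma vsum_plus n f g : vsum n (fun x => f x + g x) = vsum n f + vsum n g.
Proof. induction n as [|n IH]; [unfold vsum; simpl; ring|]. rewrite !vsum_S, IH. ring. Qed.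

Lemma vsum_scal n c f : vsum n (fun x => c * f x) = c * vsum n f.
Proof. induction n as [|n IH]; [unfold vsum; simpl; ring|]. rewrite !vsum_S, IH. ring. Qed.

Lemma vsum_minus n f g : vsum n (fun x => f x - g x) = vsum n f - vsum n g.
Proof.
  rewrite (vsum_ext n _ (fun x => f x + (-1) * g x)) by (intros; ring).
  rewrite vsum_plus, vsum_scal. ring.
Qed.

Lemma vsum_zero n : vsum n (fun _ => 0) = 0.
Proof. induction n as [|n IH]; [reflexivity|]. rewrite vsum_S, IH. ring. Qed.

Lemma vsum_le n f g : (forall x, (x < n)%nat -> f x <= g x) -> vsum n f <= vsum n g.
Proof.
  induction n as [|n IH]; intro H; [unfold vsum; simpl; lra|].
  rewrite !vsum_S.
  assert (vsum n f <= vsum n g) by (apply IH; intros; apply H; lia).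
  assert (f n <= g n) by (apply H; lia). lra.
Qed.

Lemma vsum_nonneg n f : (forall x, (x < n)%nat -> 0 <= f x) -> 0 <= vsum n f.
Proof. intro H. rewrite <- (vsum_zero n). now apply vsum_le. Qed.

Lemma vsum_pos n f x0 :
  (forall x, (x < n)%nat -> 0 <= f x) -> (x0 < n)%nat -> 0 < f x0 -> 0 < vsum n f.
Proof.
  induction n as [|n IH]; intros H Hx0 Hpos; [lia|].
  rewrite vsum_S. destruct (Nat.eq_dec x0 n) as [->|ne].
  - assert (0 <= vsum n f) by (apply vsum_nonneg; intros; apply H; lia). lra.
  - assert (0 < vsum n f) by (apply IH; [intros; apply H; lia | lia | exact Hpos]).
    assert (0 <= f n) by (apply H; lia). lra.
Qed.

Lemma vsum_swap m n (F : nat -> nat -> R) :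
  vsum m (fun x => vsum n (fun y => F x y)) = vsum n (fun y => vsum m (fun x => F x y)).
Proof.
  induction m as [|m IH].
  - exact (eq_sym (vsum_zero n)).
  - rewrite vsum_S, IH, <- vsum_plus. apply vsum_ext. intros. now rewrite vsum_S.
Qed.

Lemma fold_le {T : Type} (F G : T -> R) (l : list T) :
  (forall t, In t l -> F t <= G t) ->
  fold_right Rplus 0 (map F l) <= fold_right Rplus 0 (map G l).
Proof.
  induction l as [|t l IH]; intro H; simpl; [lra|].
  assert (F t <= G t) by (apply H; now left).
  assert (fold_right Rplus 0 (map F l) <= fold_right Rplus 0 (map G l))
    by (apply IH; intros; apply H; now right).
  lra.
Qed.

Lemma fold_plus {T : Type} (F G : T -> R) (l : list T) :
  fold_right Rplus 0 (map (fun t => F t + G t) l)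
  = fold_right Rplus 0 (map F l) + fold_right Rplus 0 (map G l).
Proof. induction l as [|t l IH]; simpl; [ring | rewrite IH; ring]. Qed.

Lemma fold_scal {T : Type} c (F : T -> R) (l : list T) :
  fold_right Rplus 0 (map (fun t => c * F t) l) = c * fold_right Rplus 0 (map F l).
Proof. induction l as [|t l IH]; simpl; [ring | rewrite IH; ring]. Qed.

Definition dot (n : nat) (f g : nat -> R) : R := vsum n (fun x => f x * g x).

Lemma projector_dot n W P f w :
  orth_projector n W P -> W w -> dot n f w = dot n (P f) w.
Proof.
  intros HP Hw. destruct (HP f) as [_ Horth]. specialize (Horth w Hw).
  destruct n as [|n]; [reflexivity|].
  unfold inner, vexp in Horth.
  assert (Hn : INR (S n) <> 0) by (apply not_0_INR; lia).
  assert (Z : vsum (S n) (fun x => (f x - P f x) * w x) = 0).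
  { apply (Rmult_eq_reg_r (/ INR (S n))); [lra | now apply Rinv_neq_0_compat]. }
  rewrite (vsum_ext _ _ (fun x => f x * w x - P f x * w x)) in Z by (intros; ring).
  unfold dot. rewrite vsum_minus in Z. lra.
Qed.

(* For a symmetric nonnegative kernel with unit row sums, the quadratic
   form is dominated by the squared norm: the Dirichlet form
   (1/2) sum_{x,y} a(x,y) (u x - u y)^2 is their difference. *)
Lemma stochastic_form_le n (a : nat -> nat -> R) (u : nat -> R) :
  (forall x y, a x y = a y x) -> (forall x y, 0 <= a x y) ->
  (forall x, (x < n)%nat -> vsum n (a x) = 1) ->
  dot n u (fun x => vsum n (fun y => a x y * u y)) <= dot n u u.
Proof.
  intros a_sym a_nonneg a_row. unfold dot.
  assert (Dirichlet : 0 <= vsum n (fun x => vsum n (fun y => a x y * (u x - u y) ^ 2))).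
  { apply vsum_nonneg; intros; apply vsum_nonneg; intros.
    apply Rmult_le_pos; [apply a_nonneg | apply pow2_ge_0]. }
  assert (Expand : forall x, (x < n)%nat ->
    vsum n (fun y => a x y * (u x - u y) ^ 2)
    = u x * u x - 2 * (u x * vsum n (fun y => a x y * u y))
      + vsum n (fun y => a x y * (u y * u y))).
  { intros x Hx.
    rewrite (vsum_ext n _ (fun y => (u x * u x) * a x y + ((-2 * u x) * (a x y * u y)
                                     + a x y * (u y * u y)))) by (intros; ring).
    rewrite !vsum_plus, !vsum_scal. change (vsum n (fun y => a x y)) with (vsum n (a x)).
    rewrite a_row by exact Hx. ring. }
  assert (Symmetrize : vsum n (fun x => vsum n (fun y => a x y * (u y * u y)))
                       = vsum n (fun y => u y * u y)).
  { rewrite vsum_swap. apply vsum_ext. intros y Hy.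
    rewrite (vsum_ext n _ (fun x => (u y * u y) * a y x)) by (intros; rewrite a_sym; ring).
    rewrite vsum_scal. change (vsum n (fun x => a y x)) with (vsum n (a y)).
    rewrite a_row by exact Hy. ring. }
  rewrite (vsum_ext n _ _ Expand), !vsum_plus, vsum_minus, Symmetrize in Dirichlet.
  rewrite vsum_scal in Dirichlet. lra.
Qed.

Lemma b2R_nonneg b : 0 <= b2R b.
Proof. destruct b; simpl; lra. Qed.

Section RandomWalk.
Variables (n d : nat) (adj : nat -> nat -> bool).
Hypothesis d_pos : (1 <= d)%nat.
Hypothesis adj_regular : regular_graph n adj d.

Definition walk_kernel (x y : nat) : R := b2R (adj x y) / INR d.

Let d_posR : 0 < INR d.
Proof. apply lt_0_INR. lia. Qed.

Lemma walkE g x : walk n adj d g x = vsum n (fun y => walk_kernel x y * g y).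
Proof.
  unfold walk, walk_kernel, Rdiv. rewrite Rmult_comm, <- vsum_scal.
  apply vsum_ext. intros. ring.
Qed.

Lemma walk_kernel_sym x y : walk_kernel x y = walk_kernel y x.
Proof. unfold walk_kernel. destruct adj_regular as [Hsym _]. now rewrite Hsym. Qed.

Lemma walk_kernel_nonneg x y : 0 <= walk_kernel x y.
Proof.
  unfold walk_kernel, Rdiv. apply Rmult_le_pos; [apply b2R_nonneg |].
  left. now apply Rinv_0_lt_compat.
Qed.

Lemma walk_kernel_row x : (x < n)%nat -> vsum n (walk_kernel x) = 1.
Proof.
  intro Hx. destruct adj_regular as [_ [_ Hdeg]]. unfold walk_kernel.
  rewrite (vsum_ext n _ (fun y => / INR d * b2R (adj x y))) by (intros; unfold Rdiv; ring).
  rewrite vsum_scal, Hdeg by exact Hx. field. lra.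
Qed.

Lemma walk_form_le g : dot n g (walk n adj d g) <= dot n g g.
Proof.
  unfold dot. rewrite (vsum_ext n _ (fun x => g x * vsum n (fun y => walk_kernel x y * g y)))
    by (intros; now rewrite walkE).
  apply stochastic_form_le; [apply walk_kernel_sym | apply walk_kernel_nonneg | apply walk_kernel_row].
Qed.

Lemma eigenvalue_le_one m u : eigvec n adj d m u -> m <= 1.
Proof.
  intros [[x1 [Hx1 Hux1]] Heig].
  pose proof (walk_form_le u) as Hle. unfold dot in Hle.
  rewrite (vsum_ext n _ (fun x => m * (u x * u x))) in Hle
    by (intros x Hx; rewrite Heig by exact Hx; ring).
  rewrite vsum_scal in Hle.
  assert (0 < vsum n (fun x => u x * u x)).
  { apply vsum_pos with x1; [intros; nra | exact Hx1 | ].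
    apply Rsqr_pos_lt. exact Hux1. }
  nra.
Qed.

Lemma eigvec_top_span lam m u : lam <= m -> eigvec n adj d m u -> top_span n adj d lam u.
Proof.
  intros Hm Hu. exists ((1, u) :: nil). split.
  - intros c v [Heq | []]. inversion Heq; subst. now exists m.
  - intros x _. simpl. ring.
Qed.

Section TopProjector.
Variables (lam : R) (P : (nat -> R) -> (nat -> R)).
Hypothesis lam_pos : 0 < lam.
Hypothesis P_proj : orth_projector n (top_span n adj d lam) P.

(* On a single eigenvector u of the walk with eigenvalue m, the energy of g
   is at most lam times its weight, plus the weight of P g: below lam the
   first term suffices, and above lam the eigenvector lies in the range of
   P, whence the coefficients of g and of P g agree, and m <= 1. *)
Lemma eigen_coefficient_bound m u g :
  (forall x, (x < n)%nat -> vsum n (fun y => walk_kernel x y * u y) = m * u x) ->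
  m * dot n g u ^ 2 <= lam * dot n g u ^ 2 + dot n (P g) u ^ 2.
Proof.
  intro Heig.
  assert (Hsq : 0 <= dot n g u ^ 2 /\ 0 <= dot n (P g) u ^ 2) by (split; apply pow2_ge_0).
  destruct (Rlt_le_dec m lam) as [Hlt | Hge]; [nra|].
  destruct (classic (exists x, (x < n)%nat /\ u x <> 0)) as [Hnz | Hz].
  - assert (Hev : eigvec n adj d m u).
    { split; [exact Hnz |]. intros x Hx. now rewrite walkE, Heig. }
    rewrite <- (projector_dot n _ P g u P_proj) by (now apply (eigvec_top_span lam m)).
    pose proof (eigenvalue_le_one m u Hev). nra.
  - assert (Hzero : dot n g u = 0).
    { unfold dot. rewrite <- (vsum_zero n). apply vsum_ext. intros x Hx.
      destruct (Req_dec (u x) 0) as [-> | Hne]; [ring |].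
      exfalso. apply Hz. now exists x. }
    rewrite Hzero. nra.
Qed.

Lemma walk_form_top_bound g :
  dot n g (walk n adj d g) <= lam * dot n g g + dot n (P g) (P g).
Proof.
  destruct (RealSpectral.symmetric_kernel_eigenframe (n := n) (a := walk_kernel))
    as [l [Heig [Hparseval Hform]]].
  { intros x y _ _. apply walk_kernel_sym. }
  assert (Hwalk : dot n g (walk n adj d g)
                  = vsum n (fun x => g x * vsum n (fun y => walk_kernel x y * g y))).
  { apply vsum_ext. intros. now rewrite walkE. }
  rewrite Hwalk, Hform. unfold dot. rewrite !Hparseval, <- fold_scal, <- fold_plus.
  apply fold_le. intros [m u] Hin. apply eigen_coefficient_bound. exact (Heig m u Hin).
Qed.

End TopProjector.

Lemma expansion_eq S :
  let f := fun x => b2R (S x) in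
  expansion n adj d S = (vsum n f - dot n f (walk n adj d f)) / vsum n f.
Proof.
  intro f. unfold expansion. f_equal. unfold dot. rewrite <- vsum_minus.
  apply vsum_ext. intros x Hx. rewrite walkE.
  rewrite (vsum_ext n _ (fun y => INR d * walk_kernel x y - INR d * (walk_kernel x y * f y))).
  - rewrite vsum_minus, !vsum_scal, walk_kernel_row by exact Hx.
    unfold f. field. lra.
  - intros y _. unfold walk_kernel, f. destruct (S y); simpl; field; lra.
Qed.

End RandomWalk.

Lemma rpow_abs_sq y : rpow (Rabs y) 2 = y * y.
Proof.
  unfold rpow. destruct (Req_EM_T (Rabs y) 0) as [Hy | Hy].
  - assert (y = 0) by (destruct (Req_dec y 0); [assumption | now apply Rabs_no_R0 in H]).
    subst. ring.
  - replace 2 with (INR 2) by (simpl; ring). rewrite Rpower_pow by (pose proof (Rabs_pos y); lra).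
    simpl. rewrite Rmult_1_r, <- Rabs_mult. apply Rabs_pos_eq. nra.
Qed.

Lemma pnorm_two n f : pnorm n 2 f = sqrt (dot n f f / INR n).
Proof.
  unfold pnorm, vexp, dot. rewrite (vsum_ext n _ (fun x => f x * f x)) by (intros; apply rpow_abs_sq).
  unfold rpow. destruct (Req_EM_T _ 0) as [-> | Hne]; [now rewrite sqrt_0 |].
  replace (1 / 2) with (/ 2) by field. apply Rpower_sqrt.
  destruct (Rle_lt_dec 0 (vsum n (fun x => f x * f x) / INR n)) as [H | H]; [lra |].
  exfalso. destruct n as [|n]; [unfold vsum in H; simpl in H; lra |].
  assert (0 <= vsum (S n) (fun x => f x * f x) / INR (S n)); [|lra].
  apply Rle_mult_inv_pos; [apply vsum_nonneg; intros; nra | apply lt_0_INR; lia].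
Qed.

Lemma opnorm_bound n p P N f :
  (0 < n)%nat -> is_lub (opnorm_set n p P) N -> pnorm n p f <= 1 ->
  dot n (P f) (P f) <= INR n * N ^ 2.
Proof.
  intros Hn [Hub _] Hf.
  assert (HnR : 0 < INR n) by (apply lt_0_INR; lia).
  assert (Hle : pnorm n 2 (P f) <= N) by (apply Hub; now exists f).
  rewrite pnorm_two in Hle.
  assert (Hnonneg : 0 <= dot n (P f) (P f) / INR n)
    by (apply Rle_mult_inv_pos; [apply vsum_nonneg; intros; nra | lra]).
  pose proof (sqrt_sqrt _ Hnonneg). pose proof (sqrt_pos (dot n (P f) (P f) / INR n)).
  assert (dot n (P f) (P f) / INR n <= N ^ 2) by nra.
  replace (dot n (P f) (P f)) with (INR n * (dot n (P f) (P f) / INR n)) by (field; lra).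
  nra.
Qed.

Lemma scaled_indicator_pnorm n p S :
  0 < p -> 0 < mu n S ->
  pnorm n p (fun x => Rpower (mu n S) (- (1 / p)) * b2R (S x)) = 1.
Proof.
  intros Hp Hmu. unfold pnorm.
  assert (Hc : rpow (Rpower (mu n S) (- (1 / p))) p = / mu n S).
  { unfold rpow. destruct (Req_EM_T _ 0) as [H0 | _]; [pose proof (exp_pos (- (1 / p) * ln (mu n S))); unfold Rpower in H0; lra |].
    rewrite Rpower_mult. replace (- (1 / p) * p) with (Ropp 1) by (field; lra).
    now rewrite Rpower_Ropp, Rpower_1. }
  assert (Hsum : vexp n (fun x => rpow (Rabs (Rpower (mu n S) (- (1 / p)) * b2R (S x))) p) = 1).
  { unfold vexp. rewrite (vsum_ext n _ (fun x => / mu n S * b2R (S x))).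
    - rewrite vsum_scal. unfold Rdiv. rewrite Rmult_assoc.
      change (vsum n (fun x => b2R (S x)) * / INR n) with (mu n S). field. lra.
    - intros x _. destruct (S x); simpl.
      + rewrite Rmult_1_r, Rabs_pos_eq by (left; apply exp_pos). rewrite Hc. ring.
      + rewrite Rmult_0_r, Rabs_R0. unfold rpow. destruct (Req_EM_T 0 0); [ring | congruence]. }
  rewrite Hsum. unfold rpow. destruct (Req_EM_T 1 0); [lra |].
  unfold Rpower. now rewrite ln_1, Rmult_0_r, exp_0.
Qed.

Lemma scaling_exponent m q : 0 < m -> 1 < q ->
  / (Rpower m (- (1 / (q / (q - 1)))) ^ 2 * m) = Rpower m ((q - 2) / q).
Proof.
  intros Hm Hq.
  rewrite <- (Rpower_1 m) at 2 by exact Hm.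
  rewrite <- Rpower_pow, Rpower_mult, <- Rpower_plus, <- Rpower_Ropp by (unfold Rpower; apply exp_pos).
  f_equal. simpl. field. lra.
Qed.

Lemma dot_walk_scal n adj d c f :
  dot n (fun x => c * f x) (walk n adj d (fun x => c * f x)) = c ^ 2 * dot n f (walk n adj d f).
Proof.
  unfold dot, walk. rewrite <- vsum_scal. apply vsum_ext. intros x _.
  rewrite (vsum_ext n _ (fun y => c * (b2R (adj x y) * f y))) by (intros; ring).
  rewrite vsum_scal. unfold Rdiv. ring.
Qed.

Lemma dot_scal n c f g : dot n (fun x => c * f x) (fun x => c * g x) = c ^ 2 * dot n f g.
Proof. unfold dot. rewrite <- vsum_scal. apply vsum_ext. intros. ring. Qed.

Lemma dot_indicator n S :
  dot n (fun x => b2R (S x)) (fun x => b2R (S x)) = vsum n (fun x => b2R (S x)).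
Proof. apply vsum_ext. intros x _. destruct (S x); simpl; ring. Qed.

Lemma rescaled_bound lam s Q c n N2 :
  0 < s -> 0 < c -> 0 < n -> c ^ 2 * Q <= lam * (c ^ 2 * s) + n * N2 ->
  (s - Q) / s >= 1 - lam - N2 * / (c ^ 2 * (s / n)).
Proof.
  intros Hs Hc Hn HQ. apply Rle_ge.
  assert (Hc2s : 0 < c ^ 2 * s) by (apply Rmult_lt_0_compat; [apply pow_lt |]; lra).
  apply (Rmult_le_reg_r (c ^ 2 * s)); [exact Hc2s |].
  replace ((s - Q) / s * (c ^ 2 * s)) with (c ^ 2 * s - c ^ 2 * Q) by (field; lra).
  replace ((1 - lam - N2 * / (c ^ 2 * (s / n))) * (c ^ 2 * s))
    with ((1 - lam) * (c ^ 2 * s) - n * N2) by (field; lra).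
  lra.
Qed.

Theorem lemmaD4 (n : nat) (adj : nat -> nat -> bool) (d : nat)
  (lam q : R) (P : (nat -> R) -> (nat -> R)) (N : R) (S : nat -> bool) :
  (1 <= d)%nat ->
  regular_graph n adj d ->
  0 < lam < 1 ->
  2 <= q ->
  orth_projector n (top_span n adj d lam) P ->
  is_lub (opnorm_set n (q / (q - 1)) P) N ->
  (exists x, (x < n)%nat /\ S x = true) ->
  (forall x, S x = true -> (x < n)%nat) ->
  expansion n adj d S >= 1 - lam - N ^ 2 * rpow (mu n S) ((q - 2) / q).
Proof.
  intros Hd Hreg Hlam Hq HP Hlub [x0 [Hx0 HSx0]] _.
  set (f := fun x => b2R (S x)). set (s := vsum n f).
  assert (Hs : 0 < s).
  { apply vsum_pos with x0; [intros; apply b2R_nonneg | exact Hx0 | unfold f; rewrite HSx0; simpl; lra]. }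
  assert (HnR : 0 < INR n) by (apply lt_0_INR; lia).
  assert (Hmu : mu n S = s / INR n) by reflexivity.
  assert (Hmu_pos : 0 < mu n S) by (rewrite Hmu; now apply Rdiv_lt_0_compat).
  (* test the spectral bound on g = c 1_S, the indicator normalized in L^p *)
  set (c := Rpower (mu n S) (- (1 / (q / (q - 1))))).
  assert (HPg : dot n (P (fun x => c * f x)) (P (fun x => c * f x)) <= INR n * N ^ 2).
  { apply (opnorm_bound n (q / (q - 1))); [lia | exact Hlub |].
    right. apply scaled_indicator_pnorm; [apply Rdiv_lt_0_compat |]; lra. }
  pose proof (walk_form_top_bound n d adj Hd Hreg lam P (proj1 Hlam) HP (fun x => c * f x)) as Hbound.
  rewrite dot_walk_scal, dot_scal, (dot_indicator n S : dot n f f = s) in Hbound.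
  rewrite (expansion_eq n d adj Hd Hreg). fold f s.
  unfold rpow. destruct (Req_EM_T (mu n S) 0) as [Hzero | _]; [lra |].
  rewrite <- scaling_exponent by lra. fold c. rewrite Hmu.
  apply rescaled_bound; [exact Hs | unfold c, Rpower; apply exp_pos | exact HnR | lra].
Qed.
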